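(* Let $A_0$ and $A_1$ be (possibly unbounded) closed densely defined operators on Hilbert spaces $\mathfrak H_0$ and $\mathfrak H_1$. Let $\delta>0$, and assume the Sylvester operator is boundedly invertible with norm bound $1/\delta$, in the following sense: for every $Y\in\mathcal B(\mathfrak H_0,\mathfrak H_1)$ there is a unique $X\in\mathcal B(\mathfrak H_0,\mathfrak H_1)$ with $X(\mathrm{Dom}(A_0))\subset\mathrm{Dom}(A_1)$ and $XA_0x-A_1Xx=Yx$ for all $x\in\mathrm{Dom}(A_0)$, and this $X$ satisfies $\|X\|\le\|Y\|/\delta$. Let $B\in\mathcal B(\mathfrak H_1,\mathfrak H_0)$ and $C\in\mathcal B(\mathfrak H_0,\mathfrak H_1)$ satisfy $\sqrt{\|B\|\,\|C\|}<\delta/2$. Then the Riccati equation $KA_0-A_1K+KBK=C$ has a unique strong solution $K$ in the closed ball $\{K\in\mathcal B(\mathfrak H_0,\mathfrak H_1):\|K\|\le \delta/(2\|B\|)\}$; when $B=0$ this ball is the whole space $\mathcal B(\mathfrak H_0,\mathfrak H_1)$. This solution satisfies $$\|K\|\le\frac{\|C\|}{\frac{\delta}{2}+\sqrt{\frac{\delta^2}{4}-\|B\|\,\|C\|}}.$$ For $B\ne0$ the right-hand side equals $\sqrt{\|C\|/\|B\|}\,\tanh\!\Bigl(\tfrac12\operatorname{arctanh}\tfrac{2\sqrt{\|B\|\|C\|}}{\delta}\Bigr)$.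
   Context: $\mathcal B(\mathfrak M,\mathfrak N)$ denotes the bounded linear operators from $\mathfrak M$ to $\mathfrak N$. An operator $K\in\mathcal B(\mathfrak H_0,\mathfrak H_1)$ is a strong solution of the Riccati equation $KA_0-A_1K+KBK=C$ if $K(\mathrm{Dom}(A_0))\subset\mathrm{Dom}(A_1)$ and $KA_0x-A_1Kx+KBKx=Cx$ for all $x\in\mathrm{Dom}(A_0)$. *)

From Stdlib Require Import Reals ClassicalEpsilon.
Open Scope R_scope.

Record Cplx := mkC { Cre : R; Cim : R }.
Definition C0 : Cplx := mkC 0 0.
Definition C1 : Cplx := mkC 1 0.
Definition Cadd (a b : Cplx) : Cplx := mkC (Cre a + Cre b) (Cim a + Cim b).
Definition Cmul (a b : Cplx) : Cplx :=
  mkC (Cre a * Cre b - Cim a * Cim b) (Cre a * Cim b + Cim a * Cre b).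
Definition Cconj (a : Cplx) : Cplx := mkC (Cre a) (- Cim a).

Record HilbertSpace := {
  hcar :> Type;
  hzero : hcar;
  hadd : hcar -> hcar -> hcar;
  hopp : hcar -> hcar;
  hscal : Cplx -> hcar -> hcar;
  hinner : hcar -> hcar -> Cplx;
  hadd_assoc : forall x y z, hadd x (hadd y z) = hadd (hadd x y) z;
  hadd_comm : forall x y, hadd x y = hadd y x;
  hadd_0l : forall x, hadd hzero x = x;
  hadd_oppl : forall x, hadd (hopp x) x = hzero;
  hscal_1 : forall x, hscal C1 x = x;
  hscal_mul : forall a b x, hscal (Cmul a b) x = hscal a (hscal b x);
  hscal_addv : forall a x y, hscal a (hadd x y) = hadd (hscal a x) (hscal a y);
  hscal_adds : forall a b x, hscal (Cadd a b) x = hadd (hscal a x) (hscal b x);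
  hinner_addl : forall x y z, hinner (hadd x y) z = Cadd (hinner x z) (hinner y z);
  hinner_scall : forall a x y, hinner (hscal a x) y = Cmul a (hinner x y);
  hinner_sym : forall x y, hinner y x = Cconj (hinner x y);
  hinner_pos : forall x, 0 <= Cre (hinner x x);
  hinner_def : forall x, Cre (hinner x x) = 0 -> x = hzero;
  hcomplete : forall u : nat -> hcar,
    (forall eps, 0 < eps -> exists N, forall m n, (N <= m)%nat -> (N <= n)%nat ->
        sqrt (Cre (hinner (hadd (u m) (hopp (u n))) (hadd (u m) (hopp (u n))))) < eps) ->
    exists l, forall eps, 0 < eps -> exists N, forall n, (N <= n)%nat ->
        sqrt (Cre (hinner (hadd (u n) (hopp l)) (hadd (u n) (hopp l)))) < eps
}.

Arguments hzero {h}. Arguments hadd {h}. Arguments hopp {h}.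
Arguments hscal {h}. Arguments hinner {h}.

Definition hsub {H : HilbertSpace} (x y : H) : H := hadd x (hopp y).
Definition hnorm {H : HilbertSpace} (x : H) : R := sqrt (Cre (hinner x x)).

Definition linear_map {H0 H1 : HilbertSpace} (f : H0 -> H1) : Prop :=
  (forall x y, f (hadd x y) = hadd (f x) (f y)) /\
  (forall a x, f (hscal a x) = hscal a (f x)).

Definition bounded_op {H0 H1 : HilbertSpace} (f : H0 -> H1) : Prop :=
  linear_map f /\ exists M, forall x, hnorm (f x) <= M * hnorm x.

(* operator norm: sup { ||f x|| : ||x|| <= 1 } (chosen by epsilon; it is the
   least upper bound whenever that exists, in particular for bounded f) *)
Definition opnorm_spec {H0 H1 : HilbertSpace} (f : H0 -> H1) (r : R) : Prop :=
  is_lub (fun t => exists x, hnorm x <= 1 /\ t = hnorm (f x)) r.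
Definition opnorm {H0 H1 : HilbertSpace} (f : H0 -> H1) : R :=
  epsilon (inhabits 0) (opnorm_spec f).

Definition closed_densely_defined {H : HilbertSpace} (D : H -> Prop) (A : H -> H) : Prop :=
  D hzero /\ (forall x y, D x -> D y -> D (hadd x y)) /\
  (forall a x, D x -> D (hscal a x)) /\
  (forall x y, D x -> D y -> A (hadd x y) = hadd (A x) (A y)) /\
  (forall a x, D x -> A (hscal a x) = hscal a (A x)) /\
  (forall x eps, 0 < eps -> exists y, D y /\ hnorm (hsub x y) < eps) /\
  (forall (u : nat -> H) x y, (forall n, D (u n)) ->
     (forall eps, 0 < eps -> exists N, forall n, (N <= n)%nat -> hnorm (hsub (u n) x) < eps) ->
     (forall eps, 0 < eps -> exists N, forall n, (N <= n)%nat -> hnorm (hsub (A (u n)) y) < eps) ->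
     D x /\ A x = y).

Definition sylvester_strong_sol {H0 H1 : HilbertSpace}
  (D0 : H0 -> Prop) (A0 : H0 -> H0) (D1 : H1 -> Prop) (A1 : H1 -> H1)
  (Y X : H0 -> H1) : Prop :=
  (forall x, D0 x -> D1 (X x)) /\
  (forall x, D0 x -> hsub (X (A0 x)) (A1 (X x)) = Y x).

Definition riccati_strong_sol {H0 H1 : HilbertSpace}
  (D0 : H0 -> Prop) (A0 : H0 -> H0) (D1 : H1 -> Prop) (A1 : H1 -> H1)
  (B : H1 -> H0) (C : H0 -> H1) (K : H0 -> H1) : Prop :=
  (forall x, D0 x -> D1 (K x)) /\
  (forall x, D0 x -> hadd (hsub (K (A0 x)) (A1 (K x))) (K (B (K x))) = C x).

Definition arctanh (x : R) : R := ln ((1 + x) / (1 - x)) / 2.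

(* K solves the Riccati equation iff it solves the Sylvester
   equation  K A0 - A1 K = C - K B K.  Writing S for the (bounded, norm <= 1/delta)
   solution operator of the Sylvester equation, K is a fixed point of
   K |-> S (C - K B K).  On the ball ||K|| <= r, where r is the smaller root of
   b r^2 - delta r + c = 0 (b = ||B||, c = ||C||), this map is a contraction
   with constant q = 2 r b / delta < 1, so the Picard iterates K_0 = 0,
   K_(n+1) = S (C - K_n B K_n) converge; their limit is the solution, and the
   same contraction estimate gives uniqueness in the ball ||K|| ||B|| <= delta/2. *)
From Stdlib Require Import Reals Lra ClassicalEpsilon FunctionalExtensionality.
Open Scope R_scope.

Arguments hadd_assoc {h}. Arguments hadd_comm {h}. Arguments hadd_0l {h}.
Arguments hadd_oppl {h}. Arguments hscal_1 {h}.
Arguments hscal_addv {h}. Arguments hscal_adds {h}. Arguments hinner_addl {h}.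
Arguments hinner_scall {h}. Arguments hinner_sym {h}. Arguments hinner_pos {h}.
Arguments hinner_def {h}. Arguments hcomplete {h}.

Section VectorAlgebra.
Variable H : HilbertSpace.
Implicit Types x y z a b c d : H.

Lemma hadd_0r x : hadd x hzero = x.
Proof. rewrite hadd_comm; apply hadd_0l. Qed.

Lemma hadd_oppr x : hadd x (hopp x) = hzero.
Proof. rewrite hadd_comm; apply hadd_oppl. Qed.

Lemma hadd_cancell x y z : hadd x y = hadd x z -> y = z.
Proof.
  intro E. rewrite <- (hadd_0l y), <- (hadd_0l z), <- (hadd_oppl x), <- !hadd_assoc, E.
  reflexivity.
Qed.

Lemma hopp_unique a x : hadd a x = hzero -> a = hopp x.
Proof. intro E. rewrite <- (hadd_0r a), <- (hadd_oppr x), hadd_assoc, E, hadd_0l. reflexivity. Qed.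

Lemma hopp_opp x : hopp (hopp x) = x.
Proof. symmetry; apply hopp_unique, hadd_oppr. Qed.

Lemma hadd_ACA a b c d : hadd (hadd a b) (hadd c d) = hadd (hadd a c) (hadd b d).
Proof. rewrite <- !hadd_assoc. f_equal. rewrite !hadd_assoc. f_equal. apply hadd_comm. Qed.

Lemma hopp_add x y : hopp (hadd x y) = hadd (hopp x) (hopp y).
Proof. symmetry; apply hopp_unique. rewrite hadd_ACA, !hadd_oppl, hadd_0l. reflexivity. Qed.

Lemma hsub_0r x : hsub x hzero = x.
Proof.
  unfold hsub. replace (hopp (@hzero H)) with (@hzero H); [apply hadd_0r|].
  apply hopp_unique, hadd_0l.
Qed.

Lemma hsub_diag a : hsub a a = hzero.
Proof. apply hadd_oppr. Qed.

Lemma hsub_addK c k : hadd (hsub c k) k = c.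
Proof. unfold hsub. rewrite <- hadd_assoc, hadd_oppl, hadd_0r. reflexivity. Qed.

Lemma hadd_subK (u v : H) : hsub (hadd u v) v = u.
Proof. unfold hsub. rewrite <- hadd_assoc, hadd_oppr, hadd_0r. reflexivity. Qed.

Lemma hsub_eq0 (u v : H) : hsub u v = hzero -> u = v.
Proof. intro E. rewrite <- (hsub_addK u v), E, hadd_0l. reflexivity. Qed.

Lemma hsub_split a b c : hsub a c = hadd (hsub a b) (hsub b c).
Proof.
  unfold hsub. rewrite <- hadd_assoc, (hadd_assoc (hopp b)), hadd_oppl, hadd_0l.
  reflexivity.
Qed.

Lemma hsub_swap a b : hsub b a = hopp (hsub a b).
Proof. unfold hsub. rewrite hopp_add, hopp_opp, hadd_comm. reflexivity. Qed.

Lemma hsub_add a b c d : hsub (hadd a b) (hadd c d) = hadd (hsub a c) (hsub b d).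
Proof. unfold hsub. rewrite hopp_add, hadd_ACA. reflexivity. Qed.

Lemma hsub_sub a b c d : hsub (hsub a b) (hsub c d) = hsub (hsub a c) (hsub b d).
Proof. unfold hsub. rewrite !hopp_add, !hopp_opp, hadd_ACA. reflexivity. Qed.

Lemma hsub_subl c a b : hsub (hsub c a) (hsub c b) = hsub b a.
Proof. rewrite hsub_sub, hsub_diag. unfold hsub. rewrite hadd_0l, hopp_add, hopp_opp, hadd_comm. reflexivity. Qed.

Lemma hscal_0v (s : Cplx) : hscal s (@hzero H) = hzero.
Proof.
  apply (hadd_cancell (hscal s hzero)). rewrite <- hscal_addv, !hadd_0r. reflexivity.
Qed.

Lemma hscal_zero x : hscal (mkC 0 0) x = hzero.
Proof.
  apply (hadd_cancell (hscal (mkC 0 0) x)). rewrite <- hscal_adds, hadd_0r.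
  unfold Cadd; simpl. rewrite Rplus_0_r. reflexivity.
Qed.

Lemma hopp_scal x : hopp x = hscal (mkC (-1) 0) x.
Proof.
  symmetry. apply hopp_unique. rewrite <- (hscal_1 x) at 2. rewrite <- hscal_adds.
  unfold Cadd, C1; simpl. replace (-1 + 1) with 0 by ring. rewrite Rplus_0_r.
  apply hscal_zero.
Qed.

Lemma hscal_opp (s : Cplx) x : hscal s (hopp x) = hopp (hscal s x).
Proof. apply hopp_unique. rewrite <- hscal_addv, hadd_oppl. apply hscal_0v. Qed.

Lemma hscal_sub (s : Cplx) x y : hscal s (hsub x y) = hsub (hscal s x) (hscal s y).
Proof. unfold hsub. rewrite hscal_addv, hscal_opp. reflexivity. Qed.
End VectorAlgebra.

Section Norm.
Variable H : HilbertSpace.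
Implicit Types x y z u v : H.

Lemma inner_diag_im x : Cim (hinner x x) = 0.
Proof.
  pose proof (hinner_sym x x) as E. destruct (hinner x x) as [p q].
  unfold Cconj in E; simpl in *. injection E. lra.
Qed.

Lemma re_inner_sym x y : Cre (hinner y x) = Cre (hinner x y).
Proof. rewrite hinner_sym. reflexivity. Qed.

Lemma re_inner_addl x y z : Cre (hinner (hadd x y) z) = Cre (hinner x z) + Cre (hinner y z).
Proof. rewrite hinner_addl. reflexivity. Qed.

Lemma re_inner_addr x y z : Cre (hinner z (hadd x y)) = Cre (hinner z x) + Cre (hinner z y).
Proof. rewrite (re_inner_sym (hadd x y)), (re_inner_sym x), (re_inner_sym y). apply re_inner_addl. Qed.

Lemma re_inner_scall t x y : Cre (hinner (hscal (mkC t 0) x) y) = t * Cre (hinner x y).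
Proof. rewrite hinner_scall. unfold Cmul; simpl. ring. Qed.

Lemma re_inner_scalr t x y : Cre (hinner y (hscal (mkC t 0) x)) = t * Cre (hinner y x).
Proof. rewrite re_inner_sym, re_inner_scall, re_inner_sym. reflexivity. Qed.

Lemma hnorm_nonneg x : 0 <= hnorm x.
Proof. apply sqrt_pos. Qed.

Lemma hnorm_sqr x : hnorm x * hnorm x = Cre (hinner x x).
Proof. apply sqrt_sqrt, hinner_pos. Qed.

Lemma hnorm_le0 x : hnorm x <= 0 -> x = hzero.
Proof.
  intro E. apply hinner_def, sqrt_eq_0; [apply hinner_pos|].
  pose proof (hnorm_nonneg x). unfold hnorm in *. lra.
Qed.

Lemma eq_of_hnorm_sub_le0 u v : hnorm (hsub u v) <= 0 -> u = v.
Proof. intro E. apply hsub_eq0, hnorm_le0, E. Qed.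

Lemma hnorm_scal (s : Cplx) x :
  hnorm (hscal s x) = sqrt (Cre s * Cre s + Cim s * Cim s) * hnorm x.
Proof.
  unfold hnorm. rewrite <- sqrt_mult_alt by nra. f_equal.
  rewrite hinner_scall, (hinner_sym (hscal s x) x), hinner_scall.
  pose proof (inner_diag_im x) as I. destruct s as [p q]. destruct (hinner x x) as [n m].
  unfold Cmul, Cconj; simpl in *. subst m. ring.
Qed.

Lemma hnorm_scalR t x : hnorm (hscal (mkC t 0) x) = Rabs t * hnorm x.
Proof.
  rewrite hnorm_scal; simpl. rewrite Rmult_0_r, Rplus_0_r, <- (sqrt_Rsqr_abs t).
  reflexivity.
Qed.

Lemma hnorm_opp x : hnorm (hopp x) = hnorm x.
Proof. rewrite hopp_scal, hnorm_scalR, Rabs_left by lra. ring. Qed.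

Lemma hnorm_subC x y : hnorm (hsub x y) = hnorm (hsub y x).
Proof. rewrite (hsub_swap _ y x), hnorm_opp. reflexivity. Qed.

Lemma hnorm_zero : hnorm (@hzero H) = 0.
Proof. rewrite <- (hscal_zero H hzero), hnorm_scalR, Rabs_R0. ring. Qed.

(* Cauchy-Schwarz, from the nonnegativity of the quadratic t |-> ||x + t y||^2. *)
Lemma cauchy_schwarz_re x y : Cre (hinner x y) <= hnorm x * hnorm y.
Proof.
  set (a := Cre (hinner x x)). set (d := Cre (hinner y y)). set (p := Cre (hinner x y)).
  assert (Q : forall t, 0 <= a + 2 * t * p + t * t * d).
  { intro t. pose proof (hinner_pos (hadd x (hscal (mkC t 0) y))) as P.
    rewrite re_inner_addl, !re_inner_addr, !re_inner_scall, !re_inner_scalr,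
      (re_inner_sym x y) in P.
    unfold a, d, p. lra. }
  assert (Ha : 0 <= a) by apply hinner_pos. assert (Hd : 0 <= d) by apply hinner_pos.
  assert (discriminant : p * p <= a * d).
  { destruct (Req_dec d 0) as [D0|D0].
    - destruct (Req_dec p 0) as [P0|P0]; [rewrite P0, D0; lra|].
      specialize (Q (- (a + 1) / (2 * p))). rewrite D0 in Q.
      replace (a + 2 * (- (a + 1) / (2 * p)) * p + - (a + 1) / (2 * p) * (- (a + 1) / (2 * p)) * 0)
        with (-1) in Q by (field; auto).
      lra.
    - specialize (Q (- p / d)).
      replace (a + 2 * (- p / d) * p + - p / d * (- p / d) * d)
        with ((a * d - p * p) / d) in Q by (field; auto).
      apply Rmult_le_compat_r with (r := d) in Q; [|lra].
      unfold Rdiv in Q. rewrite Rmult_assoc, Rinv_l in Q by lra. lra. }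
  pose proof (hnorm_sqr x) as Sx. pose proof (hnorm_sqr y) as Sy. fold a in Sx. fold d in Sy.
  pose proof (hnorm_nonneg x). pose proof (hnorm_nonneg y).
  assert (0 <= hnorm x * hnorm y) by nra.
  destruct (Rle_dec p 0); nra.
Qed.

Lemma hnorm_triangle x y : hnorm (hadd x y) <= hnorm x + hnorm y.
Proof.
  pose proof (cauchy_schwarz_re x y). pose proof (hnorm_sqr x). pose proof (hnorm_sqr y).
  pose proof (hnorm_sqr (hadd x y)) as S.
  rewrite re_inner_addl, !re_inner_addr, (re_inner_sym x y) in S.
  pose proof (hnorm_nonneg x). pose proof (hnorm_nonneg y). pose proof (hnorm_nonneg (hadd x y)).
  nra.
Qed.

Lemma hnorm_sub_triangle u v z : hnorm (hsub u z) <= hnorm (hsub u v) + hnorm (hsub v z).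
Proof. rewrite (hsub_split _ u v z). apply hnorm_triangle. Qed.
End Norm.

Definition has_bound {H0 H1 : HilbertSpace} (f : H0 -> H1) (M : R) : Prop :=
  forall x, hnorm (f x) <= M * hnorm x.

Section Operators.
Context {H0 H1 H2 : HilbertSpace}.

Lemma linear_zero (f : H0 -> H1) : linear_map f -> f hzero = hzero.
Proof.
  intros [Ha _]. apply (hadd_cancell _ (f hzero)). rewrite <- Ha, hadd_0l, hadd_0r.
  reflexivity.
Qed.

Lemma linear_sub (f : H0 -> H1) x y : linear_map f -> f (hsub x y) = hsub (f x) (f y).
Proof.
  intros [Ha Hs]. unfold hsub. rewrite Ha, !hopp_scal, Hs. reflexivity.
Qed.

Lemma linear_diff (f g : H0 -> H1) :
  linear_map f -> linear_map g -> linear_map (fun x => hsub (f x) (g x)).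
Proof.
  intros [Fa Fs] [Ga Gs]. split.
  - intros x y. rewrite Fa, Ga. apply hsub_add.
  - intros a x. rewrite Fs, Gs, hscal_sub. reflexivity.
Qed.

Lemma linear_comp (f : H1 -> H2) (g : H0 -> H1) :
  linear_map f -> linear_map g -> linear_map (fun x => f (g x)).
Proof.
  intros [Fa Fs] [Ga Gs]. split.
  - intros x y. rewrite Ga, Fa. reflexivity.
  - intros a x. rewrite Gs, Fs. reflexivity.
Qed.

Lemma has_bound_ext (f g : H0 -> H1) M : (forall x, f x = g x) -> has_bound f M -> has_bound g M.
Proof. intros E Bf x. rewrite <- E. apply Bf. Qed.

Lemma has_bound_mono (f : H0 -> H1) M N : M <= N -> has_bound f M -> has_bound f N.
Proof.
  intros L Bf x. eapply Rle_trans; [apply Bf|].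
  apply Rmult_le_compat_r; [apply hnorm_nonneg|exact L].
Qed.

Lemma has_bound_subC (f g : H0 -> H1) M :
  has_bound (fun x => hsub (f x) (g x)) M -> has_bound (fun x => hsub (g x) (f x)) M.
Proof. intros Bf x. rewrite hnorm_subC. apply Bf. Qed.

Lemma has_bound_diff (f g : H0 -> H1) M N :
  has_bound f M -> has_bound g N -> has_bound (fun x => hsub (f x) (g x)) (M + N).
Proof.
  intros Bf Bg x. unfold hsub. eapply Rle_trans; [apply hnorm_triangle|].
  rewrite hnorm_opp. pose proof (Bf x). pose proof (Bg x). lra.
Qed.

Lemma has_bound_comp (f : H1 -> H2) (g : H0 -> H1) M N :
  0 <= M -> has_bound f M -> has_bound g N -> has_bound (fun x => f (g x)) (M * N).
Proof.
  intros HM Bf Bg x. eapply Rle_trans; [apply Bf|]. rewrite Rmult_assoc.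
  apply Rmult_le_compat_l; [exact HM|apply Bg].
Qed.

Lemma bounded_has_bound (f : H0 -> H1) : bounded_op f -> exists M, 0 <= M /\ has_bound f M.
Proof.
  intros [_ [M HM]]. exists (Rabs M). split; [apply Rabs_pos|]. intro x.
  pose proof (HM x). pose proof (Rle_abs M). pose proof (hnorm_nonneg _ x). nra.
Qed.

Lemma bounded_of_bound (f : H0 -> H1) M : linear_map f -> has_bound f M -> bounded_op f.
Proof. intros L Bf. split; [exact L|exists M; exact Bf]. Qed.

Lemma bounded_zero : bounded_op (fun _ : H0 => @hzero H1).
Proof.
  apply bounded_of_bound with 0.
  - split; intros; [rewrite hadd_0l|rewrite hscal_0v]; reflexivity.
  - intro x. rewrite hnorm_zero. lra.
Qed.

Lemma bounded_diff (f g : H0 -> H1) :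
  bounded_op f -> bounded_op g -> bounded_op (fun x => hsub (f x) (g x)).
Proof.
  intros Bf Bg. destruct (bounded_has_bound f Bf) as [M [_ HM]].
  destruct (bounded_has_bound g Bg) as [N [_ HN]].
  apply bounded_of_bound with (M + N); [apply linear_diff; [apply Bf|apply Bg]|].
  apply has_bound_diff; assumption.
Qed.

Lemma opnorm_is_lub (f : H0 -> H1) : bounded_op f -> opnorm_spec f (opnorm f).
Proof.
  intro Bf. unfold opnorm. apply epsilon_spec.
  destruct (bounded_has_bound f Bf) as [M [HM0 HM]].
  destruct (completeness (fun t => exists x, hnorm x <= 1 /\ t = hnorm (f x))) as [m Hm].
  - exists M. intros t [x [Hx ->]]. pose proof (HM x). pose proof (hnorm_nonneg _ x). nra.
  - exists (hnorm (f hzero)), hzero. split; [rewrite hnorm_zero; lra|reflexivity].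
  - exists m; exact Hm.
Qed.

Lemma opnorm_nonneg (f : H0 -> H1) : bounded_op f -> 0 <= opnorm f.
Proof.
  intro Bf. destruct (opnorm_is_lub f Bf) as [U _]. apply U. exists hzero.
  rewrite linear_zero by apply Bf. rewrite !hnorm_zero. split; lra.
Qed.

Lemma opnorm_le (f : H0 -> H1) M : bounded_op f -> 0 <= M -> has_bound f M -> opnorm f <= M.
Proof.
  intros Bf HM B. destruct (opnorm_is_lub f Bf) as [_ L]. apply L.
  intros t [x [Hx ->]]. pose proof (B x). pose proof (hnorm_nonneg _ x). nra.
Qed.

Lemma has_bound_opnorm (f : H0 -> H1) : bounded_op f -> has_bound f (opnorm f).
Proof.
  intros Bf x. destruct (opnorm_is_lub f Bf) as [U _].
  destruct (Req_dec (hnorm x) 0) as [Z|Z].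
  - rewrite (hnorm_le0 _ x ltac:(lra)), linear_zero by apply Bf. rewrite !hnorm_zero. lra.
  - pose proof (hnorm_nonneg _ x). set (t := / hnorm x).
    assert (Ht : 0 < t) by (apply Rinv_0_lt_compat; lra).
    assert (unit : hnorm (hscal (mkC t 0) x) <= 1).
    { rewrite hnorm_scalR, Rabs_pos_eq by lra. unfold t. rewrite Rinv_l by auto. lra. }
    pose proof (U _ (ex_intro _ _ (conj unit eq_refl))) as Q. simpl in Q.
    rewrite (proj2 (proj1 Bf)), hnorm_scalR, Rabs_pos_eq in Q by lra.
    unfold t in Q. apply Rmult_le_compat_r with (r := hnorm x) in Q; [|lra].
    rewrite Rmult_comm, <- Rmult_assoc, Rinv_r, Rmult_1_l in Q by auto. lra.
Qed.

Lemma opnorm_eq0 (f : H0 -> H1) : bounded_op f -> opnorm f = 0 <-> forall x, f x = hzero.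
Proof.
  intro Bf. split.
  - intros E x. apply hnorm_le0. pose proof (has_bound_opnorm f Bf x) as Bx.
    rewrite E, Rmult_0_l in Bx. exact Bx.
  - intro Z. apply Rle_antisym; [|apply opnorm_nonneg, Bf].
    apply opnorm_le; [exact Bf|lra|]. intro x. rewrite Z, hnorm_zero. lra.
Qed.
End Operators.

Lemma bounded_comp {H0 H1 H2 : HilbertSpace} (f : H1 -> H2) (g : H0 -> H1) :
  bounded_op f -> bounded_op g -> bounded_op (fun x => f (g x)).
Proof.
  intros Bf Bg. destruct (bounded_has_bound f Bf) as [M [HM0 HM]].
  destruct (bounded_has_bound g Bg) as [N [_ HN]].
  apply bounded_of_bound with (M * N); [apply linear_comp; [apply Bf|apply Bg]|].
  apply has_bound_comp; assumption.
Qed.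


(* The quadratic term K B K is locally Lipschitz:
   K1 B K1 - K2 B K2 = K1 B (K1 - K2) + (K1 - K2) B K2. *)
Lemma quadratic_difference_bound {H0 H1 : HilbertSpace} (B : H1 -> H0) (K1 K2 : H0 -> H1)
    r1 r2 b e :
  linear_map B -> linear_map K1 -> has_bound B b -> has_bound K1 r1 -> has_bound K2 r2 ->
  has_bound (fun x => hsub (K1 x) (K2 x)) e -> 0 <= r1 -> 0 <= b -> 0 <= e ->
  has_bound (fun x => hsub (K1 (B (K1 x))) (K2 (B (K2 x)))) ((r1 + r2) * b * e).
Proof.
  intros LB LK1 Bb Bd1 Bd2 Be Hr1 Hb He x.
  eapply Rle_trans; [apply (hnorm_sub_triangle _ _ (K1 (B (K2 x))))|].
  rewrite <- linear_sub, <- linear_sub by assumption.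
  assert (first : hnorm (K1 (B (hsub (K1 x) (K2 x)))) <= r1 * b * e * hnorm x).
  { rewrite !Rmult_assoc. eapply Rle_trans; [apply Bd1|]. apply Rmult_le_compat_l; [exact Hr1|].
    eapply Rle_trans; [apply Bb|]. apply Rmult_le_compat_l; [exact Hb|apply Be]. }
  assert (second : hnorm (hsub (K1 (B (K2 x))) (K2 (B (K2 x)))) <= e * b * r2 * hnorm x).
  { rewrite !Rmult_assoc. eapply Rle_trans; [apply Be|]. apply Rmult_le_compat_l; [exact He|].
    eapply Rle_trans; [apply Bb|]. apply Rmult_le_compat_l; [exact Hb|apply Bd2]. }
  nra.
Qed.

Lemma vanishing_scaled (E : nat -> R) M eps :
  Un_cv E 0 -> 0 <= M -> 0 < eps -> exists N, forall n, (N <= n)%nat -> E n * M < eps.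
Proof.
  intros cvE HM He. destruct (cvE (eps / (M + 1))) as [N HN]; [apply Rdiv_lt_0_compat; lra|].
  exists N. intros n Hn. specialize (HN n Hn). unfold Rdist in HN. rewrite Rminus_0_r in HN.
  assert (abs : E n * M <= Rabs (E n) * M) by (apply Rmult_le_compat_r; [lra|apply Rle_abs]).
  apply Rmult_lt_compat_r with (r := M + 1) in HN; [|lra].
  unfold Rdiv in HN. rewrite Rmult_assoc, Rinv_l, Rmult_1_r in HN by lra.
  pose proof (Rabs_pos (E n)). nra.
Qed.

Lemma le_of_vanishing (E : nat -> R) a b M :
  Un_cv E 0 -> 0 <= M -> (forall n, a <= b + E n * M) -> a <= b.
Proof.
  intros cvE HM Hab. apply Rle_plus_epsilon. intros eps He.
  destruct (vanishing_scaled E M eps cvE HM He) as [N HN].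
  specialize (Hab N). specialize (HN N (le_n N)). lra.
Qed.

Lemma geometric_vanishes q k : 0 <= q < 1 -> Un_cv (fun n => q ^ n * k) 0.
Proof.
  intros Hq. rewrite <- (Rmult_0_l k). apply CV_mult.
  - intros eps He. destruct (pow_lt_1_zero q ltac:(rewrite Rabs_pos_eq; lra) eps He) as [N HN].
    exists N. intros n Hn. unfold Rdist. rewrite Rminus_0_r. apply HN, Hn.
  - intros eps He. exists O. intros n _. unfold Rdist. rewrite Rminus_diag, Rabs_R0. exact He.
Qed.

Section OperatorLimit.
Context {H0 H1 : HilbertSpace} (K : nat -> H0 -> H1) (E : nat -> R).
Hypothesis K_linear : forall n, linear_map (K n).
Hypothesis E_vanishes : Un_cv E 0.
Hypothesis K_cauchy :
  forall n m, (n <= m)%nat -> has_bound (fun x => hsub (K m x) (K n x)) (E n).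

Definition converges_at (x : H0) (l : H1) : Prop :=
  forall eps, 0 < eps -> exists N, forall n, (N <= n)%nat -> hnorm (hsub (K n x) l) < eps.

(* Pointwise the iterates are Cauchy, hence converge by completeness of H1. *)
Lemma converges_at_exists x : exists l, converges_at x l.
Proof.
  apply hcomplete. intros eps He.
  destruct (vanishing_scaled E (hnorm x) eps E_vanishes (hnorm_nonneg _ x) He) as [N HN].
  exists N. intros m n Hm Hn. change (hnorm (hsub (K m x) (K n x)) < eps).
  destruct (Nat.le_ge_cases n m) as [L|L].
  - eapply Rle_lt_trans; [apply (K_cauchy n m L)|]. apply HN, Hn.
  - rewrite hnorm_subC. eapply Rle_lt_trans; [apply (K_cauchy m n L)|]. apply HN, Hm.
Qed.

Definition limit_op (x : H0) : H1 := epsilon (inhabits hzero) (converges_at x).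

Lemma limit_op_approx n x : hnorm (hsub (K n x) (limit_op x)) <= E n * hnorm x.
Proof.
  apply Rle_plus_epsilon. intros eps He.
  destruct (epsilon_spec (inhabits hzero) _ (converges_at_exists x) eps He) as [N HN].
  eapply Rle_trans; [apply (hnorm_sub_triangle _ _ (K (max N n) x))|].
  rewrite hnorm_subC. pose proof (K_cauchy n (max N n) (Nat.le_max_r _ _) x).
  pose proof (HN (max N n) (Nat.le_max_l _ _)). unfold limit_op. lra.
Qed.

Lemma limit_op_linear : linear_map limit_op.
Proof.
  split.
  - intros x y. apply eq_of_hnorm_sub_le0.
    apply (le_of_vanishing E _ 0 (hnorm (hadd x y) + (hnorm x + hnorm y)) E_vanishes);
      [pose proof (hnorm_nonneg _ x); pose proof (hnorm_nonneg _ y);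
       pose proof (hnorm_nonneg _ (hadd x y)); lra|].
    intro n. rewrite (hsub_split _ _ (hadd (K n x) (K n y))), hsub_add, <- (proj1 (K_linear n)).
    eapply Rle_trans; [apply hnorm_triangle|]. rewrite hnorm_subC.
    pose proof (hnorm_triangle _ (hsub (K n x) (limit_op x)) (hsub (K n y) (limit_op y))).
    pose proof (limit_op_approx n x). pose proof (limit_op_approx n y).
    pose proof (limit_op_approx n (hadd x y)). lra.
  - intros s x. apply eq_of_hnorm_sub_le0.
    set (abs_s := sqrt (Cre s * Cre s + Cim s * Cim s)).
    assert (Hs : 0 <= abs_s) by apply sqrt_pos.
    apply (le_of_vanishing E _ 0 (hnorm (hscal s x) + abs_s * hnorm x) E_vanishes);
      [pose proof (hnorm_nonneg _ x); pose proof (hnorm_nonneg _ (hscal s x)); nra|].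
    intro n. rewrite (hsub_split _ _ (hscal s (K n x))), <- hscal_sub, <- (proj2 (K_linear n)).
    eapply Rle_trans; [apply hnorm_triangle|]. rewrite hnorm_subC, hnorm_scal. fold abs_s.
    pose proof (limit_op_approx n x). pose proof (limit_op_approx n (hscal s x)).
    assert (abs_s * hnorm (hsub (K n x) (limit_op x)) <= abs_s * (E n * hnorm x))
      by (apply Rmult_le_compat_l; assumption).
    nra.
Qed.

Lemma limit_op_bound r : (forall n, has_bound (K n) r) -> has_bound limit_op r.
Proof.
  intros Kr x. apply (le_of_vanishing E _ _ (hnorm x) E_vanishes (hnorm_nonneg _ x)).
  intro n. rewrite <- (hsub_addK _ (limit_op x) (K n x)).
  eapply Rle_trans; [apply hnorm_triangle|]. rewrite hnorm_subC.
  pose proof (limit_op_approx n x). pose proof (Kr n x). lra.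
Qed.
End OperatorLimit.

Lemma operator_limit {H0 H1 : HilbertSpace} (K : nat -> H0 -> H1) (E : nat -> R) :
  (forall n, linear_map (K n)) -> Un_cv E 0 ->
  (forall n m, (n <= m)%nat -> has_bound (fun x => hsub (K m x) (K n x)) (E n)) ->
  exists L, linear_map L /\ (forall n, has_bound (fun x => hsub (K n x) (L x)) (E n)) /\
            (forall r, (forall n, has_bound (K n) r) -> has_bound L r).
Proof.
  intros Klin cvE Kc. exists (limit_op K).
  split; [|split].
  - apply (limit_op_linear K E); assumption.
  - intros n x. apply (limit_op_approx K E); assumption.
  - apply (limit_op_bound K E); assumption.
Qed.

(* The radius of the invariant ball: the smaller root of b r^2 - delta r + c = 0,
   written in the form that stays meaningful for b = 0. *)
Definition riccati_radius (b c delta : R) : R :=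
  c / (delta / 2 + sqrt (delta ^ 2 / 4 - b * c)).

(* r is nonnegative, is a fixed point of r |-> (c + b r^2) / delta (so the ball of
   radius r is invariant), and r b < delta / 2 (so the map contracts on it). *)
Lemma riccati_radius_spec b c delta :
  0 <= b -> 0 <= c -> 0 < delta -> b * c < delta ^ 2 / 4 ->
  let r := riccati_radius b c delta in
  0 <= r /\ (c + r * (b * r)) / delta = r /\ r * b < delta / 2.
Proof.
  intros Hb Hc Hd Hbc r. unfold r, riccati_radius.
  set (sq := sqrt (delta ^ 2 / 4 - b * c)).
  assert (Q0 : 0 < sq) by (apply sqrt_lt_R0; lra).
  assert (Q2 : sq * sq = delta ^ 2 / 4 - b * c) by (apply sqrt_sqrt; lra).
  split; [|split].
  - apply Rle_mult_inv_pos; lra.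
  - field_simplify_eq; [|lra]. replace (sq ^ 2) with (sq * sq) by ring. rewrite Q2. field.
  - apply Rmult_lt_reg_r with (delta / 2 + sq); [lra|].
    replace (c / (delta / 2 + sq) * b * (delta / 2 + sq)) with (b * c) by (field; lra). nra.
Qed.

Lemma tanh_half_arctanh t : 0 <= t < 1 ->
  tanh (arctanh t / 2) = t / (1 + sqrt (1 - t * t)).
Proof.
  intros [T0 T1]. unfold arctanh, tanh, sinh, cosh.
  set (w := (1 + t) / (1 - t)). set (u := ln w / 2 / 2).
  assert (Wp : 0 < w) by (unfold w; apply Rdiv_lt_0_compat; lra).
  set (v := exp u). assert (Vp : 0 < v) by apply exp_pos.
  rewrite exp_Ropp. fold v.
  set (m := v * v). assert (Mp : 0 < m) by (unfold m; nra).
  assert (M2 : m * m = w).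
  { unfold m, v. rewrite <- !exp_plus.
    replace (u + u + (u + u)) with (ln w) by (unfold u; field). apply exp_ln, Wp. }
  set (p := sqrt (1 - t * t)). assert (Pp : 0 < p) by (apply sqrt_lt_R0; nra).
  assert (P2 : p * p = 1 - t * t) by (apply sqrt_sqrt; nra).
  assert (Mv : m = (1 + t) / p).
  { assert (Dp : 0 < (1 + t) / p) by (apply Rdiv_lt_0_compat; lra).
    assert (m * m = (1 + t) / p * ((1 + t) / p)).
    { rewrite M2. unfold w. replace ((1 + t) / p * ((1 + t) / p)) with ((1 + t) * (1 + t) / (p * p))
        by (field; lra).
      rewrite P2. field. split; nra. }
    nra. }
  replace ((v - / v) / 2 / ((v + / v) / 2)) with ((m - 1) / (m + 1)) by (unfold m; field; nra).
  rewrite Mv. field_simplify_eq; [nra|]. split; nra.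
Qed.

Lemma riccati_radius_tanh b c delta :
  0 < b -> 0 <= c -> 0 < delta -> b * c < delta ^ 2 / 4 ->
  riccati_radius b c delta =
  sqrt (c / b) * tanh (arctanh (2 * sqrt (b * c) / delta) / 2).
Proof.
  intros Hb Hc Hd Hbc. unfold riccati_radius.
  set (s := sqrt (b * c)). assert (S0 : 0 <= s) by apply sqrt_pos.
  assert (S2 : s * s = b * c) by (apply sqrt_sqrt; nra).
  set (t := 2 * s / delta).
  assert (T0 : 0 <= t) by (apply Rle_mult_inv_pos; lra).
  assert (T1 : t < 1).
  { unfold t. apply Rmult_lt_reg_r with delta; [lra|]. unfold Rdiv.
    rewrite Rmult_assoc, Rinv_l by lra. nra. }
  rewrite tanh_half_arctanh by lra.
  set (sq := sqrt (delta ^ 2 / 4 - b * c)).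
  assert (Q0 : 0 < sq) by (apply sqrt_lt_R0; lra).
  assert (Q2 : sq * sq = delta ^ 2 / 4 - b * c) by (apply sqrt_sqrt; lra).
  assert (E : sqrt (1 - t * t) = 2 / delta * sq).
  { apply sqrt_lem_1; [nra|apply Rmult_le_pos; [apply Rle_mult_inv_pos|]; lra|].
    replace (2 / delta * sq * (2 / delta * sq)) with (4 / (delta * delta) * (sq * sq)) by (field; lra).
    rewrite Q2. unfold t.
    replace (2 * s / delta * (2 * s / delta)) with (4 * (s * s) / (delta * delta)) by (field; lra).
    rewrite S2. field. lra. }
  rewrite E.
  set (k := sqrt (c / b)). assert (K0 : 0 <= k) by apply sqrt_pos.
  assert (K2 : k * k = c / b) by (apply sqrt_sqrt, Rle_mult_inv_pos; lra).
  assert (KS : k * s = c).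
  { assert (k * s * (k * s) = c * c).
    { replace (k * s * (k * s)) with ((k * k) * (s * s)) by ring. rewrite K2, S2. field. lra. }
    assert (0 <= k * s) by nra. nra. }
  unfold t. rewrite <- KS at 1. field. split; lra.
Qed.

Lemma riccati_ball_iff {H0 H1 : HilbertSpace} (K : H0 -> H1) (B : H1 -> H0) delta :
  bounded_op K -> bounded_op B -> 0 < delta ->
  ((forall y, B y = hzero) \/ opnorm K <= delta / (2 * opnorm B)) <->
  opnorm K * opnorm B <= delta / 2.
Proof.
  intros BK BB Hd. pose proof (opnorm_nonneg K BK). pose proof (opnorm_nonneg B BB).
  destruct (Req_dec (opnorm B) 0) as [Z|NZ].
  - rewrite Z, Rmult_0_r. split; [lra|]. intros _. left. apply opnorm_eq0; assumption.
  - assert (Hb : 0 < opnorm B) by lra.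
    assert (R : delta / (2 * opnorm B) * opnorm B = delta / 2) by (field; lra).
    split.
    + intros [Z|L]; [exfalso; apply NZ, opnorm_eq0; assumption|].
      rewrite <- R. apply Rmult_le_compat_r; lra.
    + intro L. right. apply Rmult_le_reg_r with (opnorm B); lra.
Qed.

(* The only structure of the unbounded operator A1 used: its domain is closed under
   differences and A1 is additive on it. *)
Definition respects_differences {H : HilbertSpace} (D : H -> Prop) (A : H -> H) : Prop :=
  forall u v, D u -> D v -> D (hsub u v) /\ A (hsub u v) = hsub (A u) (A v).

Lemma closed_densely_defined_differences {H : HilbertSpace} (D : H -> Prop) (A : H -> H) :
  closed_densely_defined D A -> respects_differences D A.
Proof.
  intros [_ [Dadd [Dscal [Aadd [Ascal _]]]]] u v Du Dv.
  assert (Dopp : D (hopp v)) by (rewrite hopp_scal; apply Dscal, Dv).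
  unfold hsub. split.
  - apply Dadd; assumption.
  - rewrite Aadd by assumption. rewrite !hopp_scal, Ascal by assumption. reflexivity.
Qed.

Section Riccati.
Context {H0 H1 : HilbertSpace}
  (D0 : H0 -> Prop) (A0 : H0 -> H0) (D1 : H1 -> Prop) (A1 : H1 -> H1).
Hypothesis A1_differences : respects_differences D1 A1.
Variable delta : R.
Hypothesis delta_pos : 0 < delta.
Hypothesis sylvester_solvable : forall Y : H0 -> H1, bounded_op Y ->
  exists X : H0 -> H1,
    bounded_op X /\ sylvester_strong_sol D0 A0 D1 A1 Y X /\
    (forall X' : H0 -> H1, bounded_op X' -> sylvester_strong_sol D0 A0 D1 A1 Y X' -> X' = X) /\
    opnorm X <= opnorm Y / delta.
Variables (B : H1 -> H0) (C : H0 -> H1).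
Hypotheses (B_bounded : bounded_op B) (C_bounded : bounded_op C).

Local Notation sylvester := (sylvester_strong_sol D0 A0 D1 A1).
Local Notation riccati := (riccati_strong_sol D0 A0 D1 A1 B C).

Definition riccati_rhs (K : H0 -> H1) : H0 -> H1 := fun x => hsub (C x) (K (B (K x))).

Lemma riccati_iff_sylvester K : riccati K <-> sylvester (riccati_rhs K) K.
Proof.
  split; intros [HD HE]; split; auto; intros x Hx.
  - unfold riccati_rhs. rewrite <- (HE x Hx), hadd_subK. reflexivity.
  - rewrite (HE x Hx). apply hsub_addK.
Qed.

Lemma sylvester_difference Y1 Y2 X1 X2 : sylvester Y1 X1 -> sylvester Y2 X2 ->
  sylvester (fun x => hsub (Y1 x) (Y2 x)) (fun x => hsub (X1 x) (X2 x)).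
Proof.
  intros [DX1 E1] [DX2 E2].
  split; intros x Hx; destruct (A1_differences (X1 x) (X2 x) (DX1 x Hx) (DX2 x Hx)) as [Dd Ad].
  - exact Dd.
  - rewrite Ad, hsub_sub, E1, E2 by assumption. reflexivity.
Qed.

(* By uniqueness, bounded Sylvester solutions depend (1/delta)-Lipschitz on the data. *)
Lemma sylvester_stable Y1 Y2 X1 X2 M :
  bounded_op Y1 -> bounded_op Y2 -> bounded_op X1 -> bounded_op X2 ->
  sylvester Y1 X1 -> sylvester Y2 X2 -> 0 <= M ->
  has_bound (fun x => hsub (Y1 x) (Y2 x)) M ->
  has_bound (fun x => hsub (X1 x) (X2 x)) (M / delta).
Proof.
  intros BY1 BY2 BX1 BX2 S1 S2 HM BdY.
  destruct (sylvester_solvable _ (bounded_diff _ _ BY1 BY2)) as [X [BX [_ [UX NX]]]].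
  rewrite (UX _ (bounded_diff _ _ BX1 BX2) (sylvester_difference _ _ _ _ S1 S2)).
  apply has_bound_mono with (opnorm X); [|apply has_bound_opnorm, BX].
  eapply Rle_trans; [apply NX|].
  apply Rmult_le_compat_r; [left; apply Rinv_0_lt_compat, delta_pos|].
  apply opnorm_le; [apply bounded_diff|..]; assumption.
Qed.

Lemma riccati_rhs_bounded K : bounded_op K -> bounded_op (riccati_rhs K).
Proof.
  intro BK. apply bounded_diff; [exact C_bounded|].
  apply bounded_comp; [exact BK|]. apply bounded_comp; assumption.
Qed.

Lemma riccati_rhs_bound K r :
  0 <= r -> has_bound K r -> has_bound (riccati_rhs K) (opnorm C + r * (opnorm B * r)).
Proof.
  intros Hr BdK. apply has_bound_diff; [apply has_bound_opnorm, C_bounded|].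
  apply has_bound_comp; [exact Hr|exact BdK|].
  apply has_bound_comp; [apply opnorm_nonneg, B_bounded|apply has_bound_opnorm, B_bounded|exact BdK].
Qed.

Lemma riccati_contraction K1 K2 X1 X2 r1 r2 e :
  bounded_op K1 -> bounded_op K2 -> bounded_op X1 -> bounded_op X2 ->
  sylvester (riccati_rhs K1) X1 -> sylvester (riccati_rhs K2) X2 ->
  has_bound K1 r1 -> has_bound K2 r2 -> has_bound (fun x => hsub (K1 x) (K2 x)) e ->
  0 <= r1 -> 0 <= r2 -> 0 <= e ->
  has_bound (fun x => hsub (X1 x) (X2 x)) ((r1 + r2) * opnorm B * e / delta).
Proof.
  intros BK1 BK2 BX1 BX2 S1 S2 Bd1 Bd2 Be Hr1 Hr2 He.
  pose proof (opnorm_nonneg B B_bounded) as Hb.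
  apply sylvester_stable with (riccati_rhs K1) (riccati_rhs K2);
    try apply riccati_rhs_bounded; try assumption.
  - apply Rmult_le_pos; [apply Rmult_le_pos|]; lra.
  - apply has_bound_ext with (fun x => hsub (K2 (B (K2 x))) (K1 (B (K1 x)))).
    { intro x. symmetry. apply hsub_subl. }
    apply has_bound_subC, (quadratic_difference_bound B K1 K2 r1 r2 (opnorm B) e);
      try assumption; [apply B_bounded|apply BK1|apply has_bound_opnorm, B_bounded].
Qed.

Lemma riccati_unique K K' r :
  bounded_op K -> bounded_op K' -> riccati K -> riccati K' -> has_bound K r -> 0 <= r ->
  (opnorm K' + r) * opnorm B / delta < 1 -> K' = K.
Proof.
  intros BK BK' RK RK' BdK Hr Hq.
  apply riccati_iff_sylvester in RK, RK'.
  pose proof (bounded_diff _ _ BK' BK) as Bd.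
  pose proof (opnorm_nonneg B B_bounded) as Hb. pose proof (opnorm_nonneg K' BK') as Hk.
  set (e := opnorm (fun x => hsub (K' x) (K x))).
  assert (He : 0 <= e) by (apply opnorm_nonneg, Bd).
  assert (self_bound : e <= (opnorm K' + r) * opnorm B * e / delta).
  { apply opnorm_le; [exact Bd| |].
    - apply Rle_mult_inv_pos; [|exact delta_pos].
      apply Rmult_le_pos; [apply Rmult_le_pos|]; lra.
    - apply (riccati_contraction K' K); try assumption;
        [apply has_bound_opnorm, BK'|apply has_bound_opnorm, Bd]. }
  assert (Z : e = 0).
  { replace ((opnorm K' + r) * opnorm B * e / delta)
      with ((opnorm K' + r) * opnorm B / delta * e) in self_bound by (field; lra).
    nra. }
  apply functional_extensionality. intro x. apply hsub_eq0.
  exact (proj1 (opnorm_eq0 _ Bd) Z x).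
Qed.

Definition sylvester_solve (Y : H0 -> H1) : H0 -> H1 :=
  epsilon (inhabits (fun _ => hzero))
    (fun X => bounded_op X /\ sylvester Y X /\ opnorm X <= opnorm Y / delta).

Lemma sylvester_solve_spec Y : bounded_op Y ->
  bounded_op (sylvester_solve Y) /\ sylvester Y (sylvester_solve Y) /\
  opnorm (sylvester_solve Y) <= opnorm Y / delta.
Proof.
  intro BY. unfold sylvester_solve. apply epsilon_spec.
  destruct (sylvester_solvable Y BY) as [X [BX [SX [_ NX]]]]. exists X. auto.
Qed.

Fixpoint picard (n : nat) : H0 -> H1 :=
  match n with
  | O => fun _ => hzero
  | S n => sylvester_solve (riccati_rhs (picard n))
  end.

Variable r : R.
Hypotheses (r_nonneg : 0 <= r)
  (r_invariant : (opnorm C + r * (opnorm B * r)) / delta = r)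
  (r_contracting : r * opnorm B < delta / 2).

Definition rate : R := 2 * r * opnorm B / delta.

Lemma rate_bounds : 0 <= rate < 1.
Proof.
  pose proof (opnorm_nonneg B B_bounded). unfold rate. split.
  - apply Rle_mult_inv_pos; [nra|exact delta_pos].
  - apply Rmult_lt_reg_r with delta; [exact delta_pos|]. unfold Rdiv.
    rewrite Rmult_assoc, Rinv_l by lra. lra.
Qed.

(* Geometric bound on ||K_m - K_n|| for n <= m. *)
Definition picard_error (n : nat) : R := rate ^ n * (r / (1 - rate)).

(* The ball of radius r is invariant, so every iterate is bounded by r. *)
Lemma picard_in_ball n : bounded_op (picard n) /\ has_bound (picard n) r.
Proof.
  induction n as [|n [Bn Bdn]]; simpl.
  - split; [apply bounded_zero|]. intro x. rewrite hnorm_zero.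
    pose proof (hnorm_nonneg _ x). nra.
  - destruct (sylvester_solve_spec _ (riccati_rhs_bounded _ Bn)) as [B1 [_ N1]].
    split; [exact B1|].
    apply has_bound_mono with (opnorm (sylvester_solve (riccati_rhs (picard n))));
      [|apply has_bound_opnorm, B1].
    eapply Rle_trans; [apply N1|]. rewrite <- r_invariant.
    apply Rmult_le_compat_r; [left; apply Rinv_0_lt_compat, delta_pos|].
    pose proof (opnorm_nonneg B B_bounded). pose proof (opnorm_nonneg C C_bounded).
    apply opnorm_le; [apply riccati_rhs_bounded, Bn|nra|apply riccati_rhs_bound; assumption].
Qed.

Lemma picard_sylvester n : sylvester (riccati_rhs (picard n)) (picard (S n)).
Proof. apply sylvester_solve_spec, riccati_rhs_bounded, picard_in_ball. Qed.

Lemma picard_step n :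
  has_bound (fun x => hsub (picard (S n) x) (picard n x)) (rate ^ n * r).
Proof.
  pose proof rate_bounds.
  induction n as [|n IH].
  - rewrite pow_O, Rmult_1_l. apply has_bound_ext with (picard 1).
    + intro x. symmetry. apply hsub_0r.
    + apply picard_in_ball.
  - replace (rate ^ S n * r) with ((r + r) * opnorm B * (rate ^ n * r) / delta)
      by (unfold rate; simpl; field; lra).
    destruct (picard_in_ball n) as [Bn Bdn].
    destruct (picard_in_ball (S n)) as [Bn1 Bdn1].
    destruct (picard_in_ball (S (S n))) as [Bn2 _].
    apply (riccati_contraction (picard (S n)) (picard n)); try assumption;
      try apply picard_sylvester.
    apply Rmult_le_pos; [apply pow_le; lra|exact r_nonneg].
Qed.

Lemma picard_telescope n k :
  has_bound (fun x => hsub (picard (n + k) x) (picard n x))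
    (rate ^ n * r * (1 - rate ^ k) / (1 - rate)).
Proof.
  pose proof rate_bounds. induction k as [|k IH]; intro x.
  - rewrite Nat.add_0_r, hsub_diag, hnorm_zero. simpl.
    replace (rate ^ n * r * (1 - 1) / (1 - rate)) with 0 by (field; lra).
    pose proof (hnorm_nonneg _ x). lra.
  - rewrite (hsub_split _ _ (picard (n + k) x)), Nat.add_succ_r.
    eapply Rle_trans; [apply hnorm_triangle|].
    pose proof (picard_step (n + k) x) as step. pose proof (IH x).
    rewrite pow_add in step.
    replace (rate ^ n * r * (1 - rate ^ S k) / (1 - rate) * hnorm x) with
      (rate ^ n * rate ^ k * r * hnorm x
       + rate ^ n * r * (1 - rate ^ k) / (1 - rate) * hnorm x) by (simpl; field; lra).
    lra.
Qed.

Lemma picard_cauchy n m : (n <= m)%nat ->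
  has_bound (fun x => hsub (picard m x) (picard n x)) (picard_error n).
Proof.
  intro L. destruct (Nat.le_exists_sub n m L) as [k [Hm _]]. rewrite Hm, Nat.add_comm.
  apply has_bound_mono with (rate ^ n * r * (1 - rate ^ k) / (1 - rate));
    [|apply picard_telescope].
  pose proof rate_bounds. unfold picard_error.
  assert (0 <= rate ^ k) by (apply pow_le; lra).
  assert (0 <= rate ^ n * r) by (apply Rmult_le_pos; [apply pow_le; lra|exact r_nonneg]).
  replace (rate ^ n * (r / (1 - rate))) with (rate ^ n * r * 1 / (1 - rate)) by (field; lra).
  unfold Rdiv. apply Rmult_le_compat_r; [left; apply Rinv_0_lt_compat; lra|]. nra.
Qed.

Lemma picard_limit_fixed L : bounded_op L -> has_bound L r ->
  (forall n, has_bound (fun x => hsub (picard n x) (L x)) (picard_error n)) ->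
  sylvester (riccati_rhs L) L.
Proof.
  intros BL BdL approx. pose proof rate_bounds.
  destruct (sylvester_solvable _ (riccati_rhs_bounded _ BL)) as [X [BX [SX _]]].
  assert (E : L = X).
  { apply functional_extensionality. intro x. apply eq_of_hnorm_sub_le0.
    pose proof (hnorm_nonneg _ x).
    apply (le_of_vanishing picard_error _ 0 (2 * rate * hnorm x));
      [apply geometric_vanishes; lra|nra|].
    intro n. destruct (picard_in_ball n) as [Bn Bdn].
    destruct (picard_in_ball (S n)) as [Bn1 _].
    assert (En : 0 <= picard_error n).
    { apply Rmult_le_pos; [apply pow_le; lra|apply Rle_mult_inv_pos; lra]. }
    assert (step : has_bound (fun y => hsub (picard (S n) y) (X y))
                     ((r + r) * opnorm B * picard_error n / delta)).
    { apply (riccati_contraction (picard n) L); try assumption;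
        [apply picard_sylvester|apply approx]. }
    rewrite (hsub_split _ _ (picard (S n) x)).
    eapply Rle_trans; [apply hnorm_triangle|]. rewrite hnorm_subC.
    pose proof (approx (S n) x). pose proof (step x).
    replace (picard_error (S n)) with (rate * picard_error n) in *
      by (unfold picard_error; simpl; ring).
    replace ((r + r) * opnorm B * picard_error n / delta) with (rate * picard_error n) in *
      by (unfold rate; field; lra).
    nra. }
  rewrite <- E in SX. exact SX.
Qed.

Lemma riccati_exists : exists K, bounded_op K /\ has_bound K r /\ riccati K.
Proof.
  pose proof rate_bounds.
  destruct (operator_limit picard picard_error) as [L [Llin [approx Lbound]]].
  - intro n. apply (picard_in_ball n).
  - apply geometric_vanishes; lra.
  - apply picard_cauchy.
  - assert (BdL : has_bound L r) by (apply Lbound; intro n; apply picard_in_ball).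
    assert (BL : bounded_op L) by (apply bounded_of_bound with r; assumption).
    exists L. split; [exact BL|split; [exact BdL|]].
    apply riccati_iff_sylvester, picard_limit_fixed; assumption.
Qed.
End Riccati.

Theorem mainTheorem6 (H0 H1 : HilbertSpace)
  (D0 : H0 -> Prop) (A0 : H0 -> H0) (D1 : H1 -> Prop) (A1 : H1 -> H1)
  (hA0 : closed_densely_defined D0 A0) (hA1 : closed_densely_defined D1 A1)
  (delta : R) (hdelta : 0 < delta)
  (hsyl : forall Y : H0 -> H1, bounded_op Y ->
     exists X : H0 -> H1,
       bounded_op X /\ sylvester_strong_sol D0 A0 D1 A1 Y X /\
       (forall X' : H0 -> H1, bounded_op X' -> sylvester_strong_sol D0 A0 D1 A1 Y X' ->
          X' = X) /\
       opnorm X <= opnorm Y / delta)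
  (B : H1 -> H0) (C : H0 -> H1) (hB : bounded_op B) (hC : bounded_op C)
  (hBC : sqrt (opnorm B * opnorm C) < delta / 2) :
  exists K : H0 -> H1,
    bounded_op K /\
    ((forall y, B y = hzero) \/ opnorm K <= delta / (2 * opnorm B)) /\
    riccati_strong_sol D0 A0 D1 A1 B C K /\
    (forall K' : H0 -> H1, bounded_op K' ->
       ((forall y, B y = hzero) \/ opnorm K' <= delta / (2 * opnorm B)) ->
       riccati_strong_sol D0 A0 D1 A1 B C K' -> K' = K) /\
    opnorm K <= opnorm C / (delta / 2 + sqrt (delta ^ 2 / 4 - opnorm B * opnorm C)) /\
    (~ (forall y, B y = hzero) ->
       opnorm C / (delta / 2 + sqrt (delta ^ 2 / 4 - opnorm B * opnorm C))
       = sqrt (opnorm C / opnorm B) *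
         tanh (arctanh (2 * sqrt (opnorm B * opnorm C) / delta) / 2)).
Proof.
  pose proof (opnorm_nonneg B hB) as Hb. pose proof (opnorm_nonneg C hC) as Hc.
  assert (Hbc : opnorm B * opnorm C < delta ^ 2 / 4).
  { pose proof (sqrt_sqrt (opnorm B * opnorm C) ltac:(nra)).
    pose proof (sqrt_pos (opnorm B * opnorm C)). nra. }
  pose proof (closed_densely_defined_differences D1 A1 hA1) as hA1diff.
  destruct (riccati_radius_spec _ _ _ Hb Hc hdelta Hbc) as [Hr0 [Hrfix Hrsmall]].
  change (opnorm C / (delta / 2 + sqrt (delta ^ 2 / 4 - opnorm B * opnorm C)))
    with (riccati_radius (opnorm B) (opnorm C) delta).
  set (r := riccati_radius (opnorm B) (opnorm C) delta) in *.
  destruct (riccati_exists D0 A0 D1 A1 hA1diff delta hdelta hsyl B C hB hC r Hr0 Hrfix Hrsmall)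
    as [K [BK [BdK RK]]].
  assert (HK : opnorm K <= r) by (apply opnorm_le; assumption).
  exists K. split; [exact BK|]. split; [|split; [exact RK|split; [|split]]].
  - apply riccati_ball_iff; [exact BK|exact hB|exact hdelta|]. nra.
  - intros K' BK' ball RK'.
    apply riccati_ball_iff in ball; [|exact BK'|exact hB|exact hdelta].
    apply (riccati_unique D0 A0 D1 A1 hA1diff delta hdelta hsyl B C hB hC K K' r);
      try assumption.
    unfold Rdiv. rewrite <- (Rinv_r delta) by lra.
    apply Rmult_lt_compat_r; [apply Rinv_0_lt_compat, hdelta|]. nra.
  - exact HK.
  - intro NZ. assert (opnorm B <> 0) by (intro Z; apply NZ, (opnorm_eq0 B hB), Z).
    apply riccati_radius_tanh; lra.
Qed.
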